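(* Let $A\ge1$ be an integer, $N=2A$, and let $\mathbf{m}=(m_0,\dots,m_N)^\top$ with $m_A=N$ and $m_i=0$ for $i\ne A$; let $\mathbf{M}=\mathrm{diag}(m_0,\dots,m_N)$. Let $\mathbf{Q}_N$ be the tridiagonal matrix with $(\mathbf{Q}_N)_{kk}=-N$, $(\mathbf{Q}_N)_{k+1,k}=N-k$, $(\mathbf{Q}_N)_{k-1,k}=k$ (indices $0,\dots,N$) and zeros elsewhere. For $\mu\ge0$ let $\overline{m}(\mu)$ be the dominant (largest) eigenvalue of $\mathbf{M}+\mu\mathbf{Q}_N$ and $\overline{r}(\mu)=\overline{m}(\mu)/N$. Then for each fixed $\mu\ge0$, $$\lim_{A\to\infty}\overline{r}(\mu)=\sqrt{\mu^2+1}-\mu.$$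
   Context: $\overline{m}(\mu)$ equals the mean fitness $\mathbf{m}\cdot\mathbf{p}$ of the positive normalized eigenvector $\mathbf{p}$ of $\mathbf{M}+\mu\mathbf{Q}_N$ (Crow–Kimura quasispecies model with permutation invariant fitness landscape). *)

From HB Require Import structures.
From mathcomp Require Import all_boot all_order all_algebra.
From mathcomp Require Import all_classical all_reals all_analysis.
Set Implicit Arguments. Unset Strict Implicit. Unset Printing Implicit Defensive.
Import Order.TTheory GRing.Theory Num.Theory.
Local Open Scope ring_scope.
Local Open Scope classical_set_scope.

Definition NN (A : nat) : nat := (2 * A)%N.

Definition fitness (R : realType) (A : nat) : 'rV[R]_((NN A).+1) :=
  \row_(i < (NN A).+1) (if val i == A then (NN A)%:R else 0).

Definition Mmat (R : realType) (A : nat) : 'M[R]_((NN A).+1) :=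
  diag_mx (fitness R A).

Definition Qmat (R : realType) (N : nat) : 'M[R]_N.+1 :=
  \matrix_(i < N.+1, j < N.+1)
    if val i == val j then - (N%:R)
    else if val i == (val j).+1 then (N - val j)%:R
    else if (val i).+1 == val j then (val j)%:R
    else 0.

(* Dominant (largest) eigenvalue of a real square matrix:
   the supremum (= maximum, the spectrum being finite) of its eigenvalues. *)
Definition dominant_eigenvalue (R : realType) (n : nat) (B : 'M[R]_n.+1) : R :=
  sup [set l : R | eigenvalue B l].

Definition mbar (R : realType) (A : nat) (mu : R) : R :=
  dominant_eigenvalue (Mmat R A + mu *: Qmat R (NN A)).

Definition rbar (R : realType) (A : nat) (mu : R) : R :=
  mbar A mu / (NN A)%:R.

From HB Require Import structures.
From mathcomp Require Import all_boot all_order all_algebra.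
From mathcomp Require Import all_classical all_reals all_analysis.
From mathcomp Require Import zify ring lra.
Import Order.TTheory GRing.Theory Num.Theory.
Import numFieldNormedType.Exports.
Set Implicit Arguments. Unset Strict Implicit. Unset Printing Implicit Defensive.
Local Open Scope ring_scope.
Local Open Scope classical_set_scope.

(* B = M + mu Q_N is tridiagonal with nonnegative off-diagonal entries.  Put
   t = sqrt (mu^2 + 1) and, for mu > 0, let e = (t - 1) / mu be the positive
   root of mu e^2 + 2 e = mu, so that 1 - mu + mu e = t - mu.  The profile
   w_k = e^|k - A| is an approximate eigenvector on both sides:
   B w <= (N (t - mu) + 2 (t - 1)) w and w B >= N (t - mu) w componentwise.
   The first inequality bounds every real eigenvalue from above
   (Collatz-Wielandt).  For the second, the three-term recurrence of a
   tridiagonal matrix produces a Sturm-type sequence of polynomials whose last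
   residual vanishes exactly at eigenvalues; a left supersolution forbids the
   sequence from being positive below N (t - mu), and the largest point where
   positivity fails is an eigenvalue.  Hence
   N (t - mu) <= mbar <= N (t - mu) + 2 (t - 1), and dividing by N = 2A gives
   the limit.  For mu = 0 the matrix is diagonal and mbar = N. *)

Section Tridiagonal.
Variable R : pzRingType.

(* Coefficients are indexed by the column, as in the definition of Q_N. *)
Definition tridiag n (b a c : nat -> R) : 'M[R]_n.+1 :=
  \matrix_(i, j) ((if i == j :> nat then b j else 0)
                + (if i == j.+1 :> nat then a j else 0)
                + (if i.+1 == j :> nat then c j else 0)).

Lemma eqS_pred (i j : nat) : (i == j.+1) = (0 < i)%N && (j == i.-1).
Proof. by case: i => [|i] //=; rewrite eqSS eq_sym. Qed.

Lemma sum_ord_eq m (P : bool) (t : nat) (F : nat -> R) :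
  \sum_(j < m) (if P && (j == t :> nat) then F j else 0) =
  if (t < m)%N && P then F t else 0.
Proof.
by rewrite -big_mkcond /= (big_ord1_cond_eq _ F (fun _ => P)).
Qed.

Lemma tridiag_row n (b a c : nat -> R) (v : nat -> R) (i : 'I_n.+1) :
  \sum_j tridiag n b a c i j * v j =
  b i * v i + (if (0 < i)%N then a i.-1 * v i.-1 else 0)
  + (if (i < n)%N then c i.+1 * v i.+1 else 0).
Proof.
pose bv k := b k * v k; pose av k := a k * v k; pose cv k := c k * v k.
have entry (j : 'I_n.+1) : tridiag n b a c i j * v j =
    (if true && (j == i :> nat) then bv j else 0)
  + (if (0 < i)%N && (j == i.-1 :> nat) then av j else 0)
  + (if true && (j == i.+1 :> nat) then cv j else 0).
  by rewrite mxE -eqS_pred [_ == j :> nat]eq_sym [_.+1 == j :> nat]eq_sym !mulrDl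
     !(fun_if (fun x => x * v j)) !mul0r.
rewrite (eq_bigr _ (fun j _ => entry j)) !big_split !sum_ord_eq ltn_ord.
by rewrite (leq_ltn_trans (leq_pred i) (ltn_ord i)) ltnS !andbT.
Qed.

Lemma tridiag_col n (b a c : nat -> R) (w : nat -> R) (j : 'I_n.+1) :
  \sum_(i < n.+1) w i * tridiag n b a c i j =
  w j * b j + (if (j < n)%N then w j.+1 * a j else 0)
  + (if (0 < j)%N then w j.-1 * c j else 0).
Proof.
pose wb k := w k * b j; pose wa k := w k * a j; pose wc k := w k * c j.
have entry (i : 'I_n.+1) : w i * tridiag n b a c i j =
    (if true && (i == j :> nat) then wb i else 0)
  + (if true && (i == j.+1 :> nat) then wa i else 0)
  + (if (0 < j)%N && (i == j.-1 :> nat) then wc i else 0).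
  by rewrite mxE -eqS_pred [_.+1 == j :> nat]eq_sym !mulrDr !(fun_if (fun x => w i * x)) !mulr0.
rewrite (eq_bigr _ (fun i _ => entry i)) !big_split !sum_ord_eq ltn_ord.
by rewrite (leq_ltn_trans (leq_pred j) (ltn_ord j)) ltnS !andbT.
Qed.

Lemma tridiag_col_boundary n (b a c w : nat -> R) (j : 'I_n.+1) :
  a n = 0 -> c 0%N = 0 ->
  \sum_(i < n.+1) w i * tridiag n b a c i j =
  w j * b j + w j.+1 * a j + w j.-1 * c j.
Proof.
move=> an0 c00; rewrite tridiag_col.
have -> : (if (j < n)%N then w j.+1 * a j else 0) = w j.+1 * a j.
  case: ltnP => // j_ge; suff -> : nat_of_ord j = n by rewrite an0 mulr0.
  by apply/eqP; rewrite eqn_leq j_ge -ltnS ltn_ord.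
by case: posnP => // ->; rewrite c00 mulr0.
Qed.

End Tridiagonal.

Lemma eigenvalue_tr (F : fieldType) n (B : 'M[F]_n) x :
  eigenvalue B^T x = eigenvalue B x.
Proof.
rewrite /eigenvalue /eigenspace !kermx_eq0 !row_free_unit -[in RHS]unitmx_tr.
by rewrite linearB /= tr_scalar_mx.
Qed.

Section Metzler.
Variable R : realFieldType.

Definition metzler n (B : 'M[R]_n) := forall i j, i != j -> 0 <= B i j.

Lemma metzler_eigenvector_abs n (B : 'M[R]_n) (v : 'rV[R]_n) l j :
  metzler B -> v *m B = l *: v -> l * `|v 0 j| <= \sum_i `|v 0 i| * B i j.
Proof.
move=> B_metzler /(congr1 (fun M : 'rV_n => M 0 j)); rewrite !mxE (bigD1 j) //=.
move=> /(congr1 (fun y => y - v 0 j * B j j)); rewrite [LHS]addrC addKr => offdiag.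
have off_le : `|l - B j j| * `|v 0 j| <= \sum_(i | i != j) `|v 0 i| * B i j.
  rewrite -normrM mulrBl [B j j * _]mulrC -offdiag (le_trans (ler_norm_sum _ _ _)) //.
  by apply: ler_sum => i ij; rewrite normrM (ger0_norm (B_metzler _ _ ij)).
rewrite (bigD1 j) //=.
have := ler_norm (l - B j j); have := normr_ge0 (v 0 j); nra.
Qed.

Lemma metzler_eigenvalue_le n (B : 'M[R]_n.+1) (u : 'I_n.+1 -> R) lam l :
  metzler B -> (forall i, 0 < u i) ->
  (forall i, \sum_j B i j * u j <= lam * u i) -> eigenvalue B l -> l <= lam.
Proof.
move=> B_metzler u_gt0 Bu_le /eigenvalueP [v vB v_neq0].
pose S := \sum_j `|v 0 j| * u j.
have S_gt0 : 0 < S.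
  rewrite lt_def sumr_ge0 ?andbT => [|j _]; last by rewrite mulr_ge0 // ltW.
  have S_term_ge0 j : true -> 0 <= `|v 0 j| * u j by rewrite mulr_ge0 // ltW.
  apply: contra v_neq0 => /eqP/(psumr_eq0P S_term_ge0) S0.
  apply/eqP/rowP => j; have /eqP := S0 j isT; rewrite !mxE.
  by rewrite mulf_eq0 normr_eq0 (gt_eqF (u_gt0 j)) orbF => /eqP.
suff : l * S <= lam * S by rewrite ler_pM2r.
apply: (@le_trans _ _ (\sum_j (\sum_i `|v 0 i| * B i j) * u j)).
  rewrite mulr_sumr; apply: ler_sum => j _; rewrite mulrA.
  by apply: ler_wpM2r; [exact: ltW | exact: metzler_eigenvector_abs].
under eq_bigr => j _ do rewrite mulr_suml.
rewrite exchange_big mulr_sumr; apply: ler_sum => i _ /=.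
under eq_bigr => j _ do rewrite -mulrA.
by rewrite -mulr_sumr mulrCA ler_wpM2l.
Qed.

End Metzler.

Lemma eigenvalue_diag_mx (F : fieldType) n (d : 'rV[F]_n) i : eigenvalue (diag_mx d) (d 0 i).
Proof.
apply/eigenvalueP; exists (delta_mx 0 i); first by rewrite -rowE row_diag_mx.
by apply/eqP => /matrixP/(_ 0 i); rewrite !mxE !eqxx; apply/eqP; exact: oner_neq0.
Qed.

Lemma dominant_eigenvalue_bounds (R : realType) n (B : 'M[R]_n.+1) lo hi :
  (forall x, x < lo -> exists2 l, x <= l & eigenvalue B l) ->
  (forall l, eigenvalue B l -> l <= hi) ->
  lo <= dominant_eigenvalue B <= hi.
Proof.
move=> eig_ge eig_le; rewrite /dominant_eigenvalue; set S := [set l | _].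
have [l0 _ S_l0] : exists2 l, lo - 1 <= l & S l by apply: eig_ge; lra.
have S_sup : has_sup S by split; [exists l0 | exists hi].
apply/andP; split; last by apply: ge_sup => //; exists l0.
apply/ler_addgt0Pr => eps eps_gt0.
have [l l_ge S_l] : exists2 l, lo - eps <= l & S l by apply: eig_ge; lra.
by have := sup_upper_bound S_sup S_l; lra.
Qed.

Section RealFacts.
Variable R : realType.

Lemma exists_gt_finite (f : nat -> R) m : exists X, forall k, (k <= m)%N -> f k < X.
Proof.
elim: m => [|m [X X_gt]].
  by exists (f 0%N + 1) => k; rewrite leqn0 => /eqP ->; rewrite ltrDl.
exists (Num.max X (f m.+1 + 1)) => k; rewrite leq_eqVlt => /orP [/eqP ->|k_le].
  by rewrite lt_max ltrDl ltr01 orbT.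
by rewrite lt_max X_gt.
Qed.

Lemma ge0_of_gt0_right (f : R -> R) x :
  {for x, continuous f} -> (forall y, x < y -> 0 < f y) -> 0 <= f x.
Proof.
move=> f_cont f_gt0; apply: (cvgr_to_ge (cvg_at_right_filter f_cont)).
near=> y; apply/ltW/f_gt0; near: y; exact: nbhs_right_gt.
Unshelve. all: by end_near.
Qed.

End RealFacts.

Section Sturm.
Variable R : realType.
Variables (n : nat) (b a c : nat -> R).
Hypothesis n_gt0 : (0 < n)%N.
Hypothesis a_gt0 : forall j, (j < n)%N -> 0 < a j.
Hypothesis c_gt0 : forall j, (0 < j <= n)%N -> 0 < c j.

(* (sturm k).[x] is q_k, where q solves rows 0, ..., n - 1 of B q = x q with
   q_0 = 1 (row k determines q_(k+1) because c (k + 1) > 0); (residual n).[x]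
   is the defect of q in the last row, so its roots are eigenvalues of B. *)
Fixpoint sturm_pair k : {poly R} * {poly R} :=
  if k is k'.+1 then
    let: (p, q) := sturm_pair k' in
    (q, (c k)^-1 *: (('X - (b k')%:P) * q - a k'.-1 *: p))
  else (0, 1).

Definition sturm k := (sturm_pair k).2.
Definition sturm_prev k := (sturm_pair k).1.
Definition residual k := ('X - (b k)%:P) * sturm k - a k.-1 *: sturm_prev k.

Lemma sturm0 : sturm 0 = 1. Proof. by []. Qed.
Lemma sturm_prev0 : sturm_prev 0 = 0. Proof. by []. Qed.
Lemma sturm_prevS k : sturm_prev k.+1 = sturm k.
Proof. by rewrite /sturm_prev /sturm /=; case: (sturm_pair k). Qed.
Lemma sturmS k : sturm k.+1 = (c k.+1)^-1 *: residual k.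
Proof. by rewrite /residual /sturm /sturm_prev /=; case: (sturm_pair k). Qed.

Lemma horner_residual k x :
  (residual k).[x] = (x - b k) * (sturm k).[x] - a k.-1 * (sturm_prev k).[x].
Proof. by rewrite /residual !hornerE. Qed.

Lemma horner_sturmS k x : (sturm k.+1).[x] = (residual k).[x] / c k.+1.
Proof. by rewrite sturmS hornerZ mulrC. Qed.

Lemma tridiag_sturm_row x (i : 'I_n.+1) :
  \sum_j tridiag n b a c i j * (sturm j).[x] =
  x * (sturm i).[x] - (if i == n :> nat then (residual n).[x] else 0).
Proof.
rewrite (tridiag_row b a c (fun k => (sturm k).[x]) i).
have -> : (if (0 < i)%N then a i.-1 * (sturm i.-1).[x] else 0)
          = a i.-1 * (sturm_prev i).[x].
  by case: (nat_of_ord i) => [|k]; rewrite ?sturm_prev0 ?horner0 ?mulr0 // sturm_prevS.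
have [->|i_neq] := eqVneq (i : nat) n.
  by rewrite ltnn horner_residual; ring.
have i_lt : (i < n)%N by rewrite ltn_neqAle i_neq -ltnS ltn_ord.
have c_neq0 : c i.+1 != 0 by rewrite gt_eqF // c_gt0.
by rewrite i_lt horner_sturmS mulrCA divff // horner_residual; ring.
Qed.

Definition sturm_pos x :=
  (forall k, (k <= n)%N -> 0 < (sturm k).[x]) /\ 0 < (residual n).[x].

Lemma sturm_pos_of_large y :
  (forall k, (k <= n)%N -> b k + a k.-1 + `|c k.+1| < y) -> sturm_pos y.
Proof.
move=> y_large.
have a_ge0 k : (k <= n)%N -> 0 <= a k.-1.
  by move=> k_le; rewrite ltW // a_gt0 //; lia.
have residual_ge k : (k <= n)%N -> (sturm_prev k).[y] <= (sturm k).[y] ->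
    (y - b k - a k.-1) * (sturm k).[y] <= (residual k).[y].
  move=> k_le pq; rewrite horner_residual.
  have := ler_wpM2l (a_ge0 k k_le) pq; rewrite !mulrBl; lra.
have step k : (k <= n)%N -> (sturm_prev k).[y] <= (sturm k).[y] /\ 0 < (sturm k).[y].
  elim: k => [_|k IH k_lt]; first by rewrite sturm0 sturm_prev0 horner0 hornerC ler01.
  have [pq q_gt0] := IH (ltnW k_lt).
  have c_pos : 0 < c k.+1 by rewrite c_gt0.
  have := y_large k (ltnW k_lt); rewrite gtr0_norm // => yk.
  have q_le : (sturm k).[y] <= (sturm k.+1).[y].
    rewrite horner_sturmS ler_pdivlMr // mulrC.
    apply: le_trans (residual_ge k (ltnW k_lt) pq).
    by rewrite ler_wpM2r ?ltW //; lra.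
  by rewrite sturm_prevS; split => //; apply: lt_le_trans q_le.
have [pq q_gt0] := step n (leqnn n).
split=> [k /step [] //|]; apply: lt_le_trans (residual_ge n (leqnn n) pq).
by rewrite mulr_gt0 //; have := y_large n (leqnn n); have := normr_ge0 (c n.+1); lra.
Qed.

Lemma sturm_pos_eventually : exists X, forall y, X <= y -> sturm_pos y.
Proof.
have [X X_gt] := exists_gt_finite (fun k => b k + a k.-1 + `|c k.+1|) n.
by exists X => y X_le; apply: sturm_pos_of_large => k /X_gt /lt_le_trans; apply.
Qed.

(* Pair the left supersolution w with q(x) > 0: B q(x) is x q(x) minus a
   nonnegative correction in the last row. *)
Lemma le_of_sturm_pos x lam (w : nat -> R) (j0 : 'I_n.+1) :
  sturm_pos x -> (forall j : 'I_n.+1, 0 <= w j) -> 0 < w j0 ->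
  (forall j : 'I_n.+1, lam * w j <= \sum_(i < n.+1) w i * tridiag n b a c i j) ->
  lam <= x.
Proof.
move=> [q_gt0 res_gt0] w_ge0 w_j0 w_sub.
have q_pos (j : 'I_n.+1) : 0 < (sturm j).[x] by rewrite q_gt0 // -ltnS.
pose S := \sum_(j < n.+1) w j * (sturm j).[x].
have S_gt0 : 0 < S.
  rewrite /S (bigD1 j0) //= ltr_pwDl ?mulr_gt0 // sumr_ge0 // => j _.
  by rewrite mulr_ge0 // ltW.
rewrite -(ler_pM2r S_gt0); apply: (@le_trans _ _
  (\sum_(j < n.+1) (\sum_(i < n.+1) w i * tridiag n b a c i j) * (sturm j).[x])).
  rewrite mulr_sumr; apply: ler_sum => j _; rewrite mulrA.
  by apply: ler_wpM2r; [exact: ltW | exact: w_sub].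
under eq_bigr => j _ do rewrite mulr_suml.
rewrite exchange_big mulr_sumr; apply: ler_sum => i _ /=.
under eq_bigr => j _ do rewrite -mulrA.
rewrite -mulr_sumr tridiag_sturm_row mulrBr mulrCA gerBl.
by case: ifP => _; rewrite mulr_ge0 // ltW.
Qed.

Lemma sturm_pos_near x : sturm_pos x -> \forall y \near x, sturm_pos y.
Proof.
move=> [q_gt0 res_gt0].
have q_pos (k : 'I_n.+1) : 0 < (sturm k).[x] by rewrite q_gt0 // -ltnS.
have q_near : \forall y \near x, forall k : 'I_n.+1, 0 < (sturm k).[y].
  apply: (@filter_forall _ _ _ (nbhs x)) => k.
  exact: (cvgr_gt _ (@continuous_horner _ _ x) _ (q_pos k)).
have res_near : \forall y \near x, 0 < (residual n).[y].
  exact: (cvgr_gt _ (@continuous_horner _ _ x) _ res_gt0).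
near=> y.
have q_y : forall k : 'I_n.+1, 0 < (sturm k).[y] by near: y.
split => [k k_le|]; last by near: y.
exact: (q_y (Ordinal (k_le : (k < n.+1)%N))).
Unshelve. all: by end_near.
Qed.

(* A zero of q_(k+1) with q_k > 0 would make the next term of the recurrence
   (q_(k+2), or the residual when k + 1 = n) negative. *)
Lemma sturm_gt0_of_ge0 x :
  (forall k, (k <= n)%N -> 0 <= (sturm k).[x]) -> 0 <= (residual n).[x] ->
  forall k, (k <= n)%N -> 0 < (sturm k).[x].
Proof.
move=> q_ge0 res_ge0; elim=> [_|k IH k_lt]; first by rewrite sturm0 hornerC ltr01.
rewrite lt_def q_ge0 // andbT; apply/eqP => q0.
have res_lt0 : (residual k.+1).[x] < 0.
  rewrite horner_residual q0 mulr0 sturm_prevS sub0r oppr_lt0.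
  by rewrite mulr_gt0 ?a_gt0 ?IH // ltnW.
have [k_lt'|k_eq] : (k.+1 < n)%N \/ k.+1 = n by lia.
  have := q_ge0 k.+2 k_lt'; rewrite horner_sturmS pmulr_lge0 ?invr_gt0 ?c_gt0 //.
  by rewrite leNgt res_lt0.
by move: res_ge0; rewrite -k_eq leNgt res_lt0.
Qed.

(* The supremum xs of the points above x1 where positivity fails is a root:
   by continuity everything is >= 0 at xs, hence > 0 except possibly the
   residual, and a positive residual would give positivity near xs. *)
Lemma residual_root_ge x1 :
  ~ sturm_pos x1 -> exists2 l, x1 <= l & (residual n).[l] = 0.
Proof.
move=> not_pos.
have [X X_pos] := sturm_pos_eventually.
pose T := [set x | x1 <= x /\ ~ sturm_pos x].
have T_ub t : T t -> t <= X.
  by move=> [_ t_not]; rewrite leNgt; apply/negP => /ltW /X_pos.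
have T_sup : has_sup T by split; [exists x1 | exists X].
set xs := sup T.
have x1_le : x1 <= xs by apply: sup_upper_bound.
have pos_right y : xs < y -> sturm_pos y.
  move=> xs_lt; apply: contrapT => y_not.
  have /(sup_upper_bound T_sup) : T y by split => //; rewrite (le_trans x1_le) // ltW.
  by rewrite leNgt xs_lt.
have q_ge0 k : (k <= n)%N -> 0 <= (sturm k).[xs].
  move=> k_le; apply: ge0_of_gt0_right; first exact: continuous_horner.
  by move=> y /pos_right [+ _]; apply.
have res_ge0 : 0 <= (residual n).[xs].
  apply: ge0_of_gt0_right; first exact: continuous_horner.
  by move=> y /pos_right [].
exists xs => //; apply/eqP; rewrite eq_le res_ge0 andbT leNgt; apply/negP => res_gt0.
have /sturm_pos_near/nbhs_ballP [d d_gt0 ball_pos] : sturm_pos xs.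
  by split=> //; apply: sturm_gt0_of_ge0.
have [t Tt t_gt] := sup_adherent d_gt0 T_sup.
have t_le : t <= xs by apply: sup_upper_bound.
case: Tt => _; apply; apply: ball_pos.
by rewrite /ball /= ger0_norm ?subr_ge0 //; rewrite -/xs in t_gt; lra.
Qed.

Lemma eigenvalue_of_residual_root l :
  (residual n).[l] = 0 -> eigenvalue (tridiag n b a c) l.
Proof.
move=> res_root; pose v : 'cV[R]_n.+1 := \col_i (sturm i).[l].
have Bv : tridiag n b a c *m v = l *: v.
  apply/colP => i; rewrite [LHS]mxE [RHS]mxE [v i 0]mxE.
  under eq_bigr => j _ do rewrite [v j 0]mxE.
  by rewrite tridiag_sturm_row res_root if_same subr0.
rewrite -eigenvalue_tr; apply/eigenvalueP; exists v^T.
  by rewrite -trmx_mul Bv linearZ.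
apply/eqP => /(congr1 (fun M : 'rV[R]_n.+1 => M 0 0)).
by rewrite !mxE sturm0 hornerC; apply/eqP; exact: oner_neq0.
Qed.

Lemma tridiag_eigenvalue_ge lam (w : nat -> R) (j0 : 'I_n.+1) :
  (forall j : 'I_n.+1, 0 <= w j) -> 0 < w j0 ->
  (forall j : 'I_n.+1, lam * w j <= \sum_(i < n.+1) w i * tridiag n b a c i j) ->
  forall x, x < lam -> exists2 l, x <= l & eigenvalue (tridiag n b a c) l.
Proof.
move=> w_ge0 w_j0 w_sub x x_lt.
have not_pos : ~ sturm_pos x.
  by move=> /le_of_sturm_pos /(_ w_ge0 w_j0 w_sub); rewrite leNgt x_lt.
have [l x_le res_root] := residual_root_ge not_pos.
by exists l => //; apply: eigenvalue_of_residual_root.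
Qed.

End Sturm.

Section Coefficients.
Variables (R : pzRingType) (A : nat) (mu : R).
Local Notation N := (NN A).

Definition qs_diag j : R := (if j == A then N%:R else 0) - mu * N%:R.
Definition qs_lower j : R := mu * (N%:R - j%:R).
Definition qs_upper j : R := mu * j%:R.

End Coefficients.

Lemma quasispecies_tridiag (R : realType) (A : nat) (mu : R) :
  Mmat R A + mu *: Qmat R (NN A) =
  tridiag (NN A) (qs_diag A mu) (qs_lower A mu) (qs_upper mu).
Proof.
apply/matrixP => i j; rewrite !mxE /= /qs_diag /qs_lower /qs_upper.
have [ij|ij] := eqVneq (i : nat) j.
  rewrite (val_inj ij) eqxx mulr1n (gtn_eqF (ltnSn j)) (ltn_eqF (ltnSn j)).
  by rewrite !addr0 mulrN.
have -> : (i == j) = false by apply: contraNF ij => /eqP ->.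
rewrite mulr0n !add0r.
case: ifP => [/eqP ->|_]; last by rewrite add0r; case: ifP; rewrite ?mulr0.
by rewrite (gtn_eqF (ltnW (ltnSn j.+1))) addr0 natrB // -ltnS.
Qed.

Section Weight.
Variables (R : numDomainType) (A : nat) (e : R).

(* e ^ |k - A|, the distance written with truncated subtraction. *)
Definition weight k : R := e ^+ ((k - A) + (A - k)).

Lemma weight_center : weight A = 1.
Proof. by rewrite /weight subnn. Qed.

Lemma weight_succ k : (A <= k)%N -> weight k.+1 = e * weight k.
Proof.
by move=> A_le; rewrite /weight -exprS; congr (e ^+ _); lia.
Qed.

Lemma weight_pred k : (k < A)%N -> weight k = e * weight k.+1.
Proof.
by move=> k_lt; rewrite /weight -exprS; congr (e ^+ _); lia.
Qed.

Lemma weight_ge0 k : 0 <= e -> 0 <= weight k.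
Proof. by move=> e_ge0; rewrite exprn_ge0. Qed.

Lemma weight_gt0 k : 0 < e -> 0 < weight k.
Proof. by move=> e_gt0; rewrite exprn_gt0. Qed.

End Weight.

Section WeightBounds.
Variables (R : realFieldType) (A : nat) (mu e : R).
Hypotheses (A_gt0 : (0 < A)%N) (mu_ge0 : 0 <= mu) (e_ge0 : 0 <= e).
Local Notation N := (NN A).
Local Notation w := (weight A e).
Local Notation B := (tridiag N (qs_diag A mu) (qs_lower A mu) (qs_upper mu)).

Lemma qs_col_weight_ge (j : 'I_N.+1) : mu * e ^+ 2 + 2 * e <= mu ->
  N%:R * (1 - mu + mu * e) * w j <= \sum_(i < N.+1) w i * B i j.
Proof.
move=> r_le; rewrite tridiag_col_boundary; last 2 first.
- by rewrite /qs_lower subrr mulr0.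
- by rewrite /qs_upper mulr0.
have r_ge0 : 0 <= mu - mu * e ^+ 2 - 2 * e by lra.
have N_eq : N%:R = 2 * A%:R :> R by rewrite natrM.
rewrite /qs_diag /qs_lower /qs_upper; move: (nat_of_ord j) => k.
have k_ge0 : 0 <= k%:R :> R by [].
case: (ltngtP k A) => [k_lt|k_gt|->].
- have c_term : w k.-1 * (mu * k%:R) = e * w k * (mu * k%:R).
    by case: k k_lt {k_ge0} => [|k] k_lt; rewrite ?mulr0 //= weight_pred // ltnW.
  rewrite c_term weight_pred // sub0r -subr_ge0.
  have k_le : k%:R + 1 <= A%:R :> R by rewrite natr1 ler_nat.
  rewrite (_ : _ - _ = w k.+1 *
    (e * (N%:R - 2 * k%:R) + (mu - mu * e ^+ 2 - 2 * e) * (N%:R - k%:R))); last by ring.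
  by rewrite mulr_ge0 ?weight_ge0 // addr_ge0 // mulr_ge0 //; lra.
- have [k' k_eq] : exists k', k = k'.+1 by exists k.-1; rewrite prednK // (leq_ltn_trans _ k_gt).
  rewrite k_eq /= in k_gt k_ge0 *; rewrite !weight_succ // ?(ltnW k_gt) // sub0r -subr_ge0.
  have k_ge : A%:R + 1 <= k'.+1%:R :> R by rewrite natr1 ler_nat.
  rewrite (_ : _ - _ = w k' *
    (e * (2 * k'.+1%:R - N%:R) + (mu - mu * e ^+ 2 - 2 * e) * k'.+1%:R)); last by ring.
  by rewrite mulr_ge0 ?weight_ge0 // addr_ge0 // mulr_ge0 //; lra.
- have wA_pred : w A.-1 = e.
    by rewrite weight_pred ?prednK ?weight_center ?mulr1 // ltn_predL.
  rewrite weight_succ // weight_center wA_pred mulr1 -subr_ge0 (_ : _ - _ = 0) //.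
  by ring.
Qed.

Lemma qs_lower_term_le k : (k <= A)%N ->
  (if (0 < k)%N then qs_lower A mu k.-1 * w k.-1 else 0)
  <= mu * (N%:R - k%:R + 1) * (e * w k).
Proof.
case: k => [_|k k_lt] /=.
  by rewrite subr0 !mulr_ge0 ?weight_ge0 // addr_ge0.
by rewrite /qs_lower weight_pred // -natr1 opprD addrA subrK mulrA.
Qed.

Lemma qs_upper_term_le k : (A <= k)%N ->
  (if (k < N)%N then qs_upper mu k.+1 * w k.+1 else 0) <= mu * (k%:R + 1) * (e * w k).
Proof.
move=> A_le; case: ifP => _; last by rewrite !mulr_ge0 ?weight_ge0 // addr_ge0.
by rewrite /qs_upper weight_succ // -natr1 mulrA.
Qed.

Lemma qs_row_weight_le (i : 'I_N.+1) : mu <= mu * e ^+ 2 + 2 * e ->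
  \sum_j B i j * w j <= (N%:R * (1 - mu + mu * e) + 2 * mu * e) * w i.
Proof.
move=> r_ge; have r_ge0 : 0 <= mu * e ^+ 2 + 2 * e - mu by lra.
have N_eq : N%:R = 2 * A%:R :> R by rewrite natrM.
rewrite tridiag_row /qs_diag; move: (nat_of_ord i) (ltn_ord i) => k k_le_N.
have k_ge0 : 0 <= k%:R :> R by [].
case: (ltngtP k A) => [k_lt|k_gt|->].
- apply: le_trans (lerD (lerD (lexx _) (qs_lower_term_le (ltnW k_lt))) (lexx _)) _.
  have k_lt_N : (k < N)%N by rewrite (leq_trans k_lt) // leq_pmull.
  rewrite k_lt_N /qs_upper weight_pred // -natr1 sub0r -subr_ge0.
  have k_le : k%:R + 1 <= A%:R :> R by rewrite natr1 ler_nat.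
  rewrite (_ : _ - _ = w k.+1 *
    (e * (N%:R - 2 * k%:R - 2) + (k%:R + 1) * (mu * e ^+ 2 + 2 * e - mu))); last by ring.
  by rewrite mulr_ge0 ?weight_ge0 // addr_ge0 // mulr_ge0 //; lra.
- apply: le_trans (lerD (lexx _) (qs_upper_term_le (ltnW k_gt))) _.
  have [k' k_eq] : exists k', k = k'.+1 by exists k.-1; rewrite prednK // (leq_ltn_trans _ k_gt).
  rewrite k_eq /= in k_gt k_le_N k_ge0 *; rewrite weight_succ // sub0r -subr_ge0.
  have k_ge : A%:R <= k'%:R :> R by rewrite ler_nat.
  have k_le : k'%:R + 1 <= N%:R :> R by rewrite natr1 ler_nat.
  rewrite /qs_lower (_ : _ - _ = w k' *
    (e * (2 * k'%:R - N%:R) + (N%:R - k'%:R) * (mu * e ^+ 2 + 2 * e - mu)));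
    last by rewrite -natr1; ring.
  by rewrite mulr_ge0 ?weight_ge0 // addr_ge0 // mulr_ge0 //; lra.
- apply: le_trans (lerD (lerD (lexx _) (qs_lower_term_le (leqnn A)))
                        (qs_upper_term_le (leqnn A))) _.
  rewrite weight_center mulr1 -subr_ge0 (_ : _ - _ = 0) //.
  by ring.
Qed.

End WeightBounds.

Section Spectrum.
Variables (R : realType) (A : nat) (mu : R).
Hypotheses (A_gt0 : (0 < A)%N) (mu_ge0 : 0 <= mu).
Local Notation N := (NN A).
Local Notation B := (Mmat R A + mu *: Qmat R N).

Lemma qs_metzler : metzler (tridiag N (qs_diag A mu) (qs_lower A mu) (qs_upper mu)).
Proof.
move=> i j ij; rewrite mxE.
have -> : (i == j :> nat) = false by apply: contraNF ij => /eqP/val_inj ->.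
rewrite add0r addr_ge0 //; case: ifP => _ //; rewrite mulr_ge0 //.
by rewrite subr_ge0 ler_nat -ltnS.
Qed.

Lemma qs_eigenvalue_le e l : 0 < e -> mu <= mu * e ^+ 2 + 2 * e ->
  eigenvalue B l -> l <= N%:R * (1 - mu + mu * e) + 2 * mu * e.
Proof.
move=> e_gt0 r_ge; rewrite quasispecies_tridiag.
apply: (metzler_eigenvalue_le (u := fun i : 'I_N.+1 => weight A e i)) qs_metzler _ _.
- by move=> i; rewrite weight_gt0.
- by move=> i; rewrite qs_row_weight_le // ltW.
Qed.

Lemma qs_eigenvalue_ge e : 0 < mu -> 0 <= e -> mu * e ^+ 2 + 2 * e <= mu ->
  forall x, x < N%:R * (1 - mu + mu * e) -> exists2 l, x <= l & eigenvalue B l.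
Proof.
move=> mu_gt0 e_ge0 r_le; rewrite quasispecies_tridiag.
have N_gt0 : (0 < N)%N by rewrite muln_gt0.
have center : (A < N.+1)%N by rewrite ltnS leq_pmull.
apply: (tridiag_eigenvalue_ge N_gt0 _ _ (j0 := Ordinal center) (w := weight A e)).
- by move=> j j_lt; rewrite /qs_lower mulr_gt0 // subr_gt0 ltr_nat.
- by move=> j /andP [j_gt0 _]; rewrite /qs_upper mulr_gt0 // ltr0n.
- by move=> j; rewrite weight_ge0.
- by rewrite /= weight_center.
- by move=> j; rewrite qs_col_weight_ge.
Qed.

End Spectrum.

Lemma mbar_bounds (R : realType) (A : nat) (mu : R) : (0 < A)%N -> 0 <= mu ->
  (NN A)%:R * (Num.sqrt (mu ^+ 2 + 1) - mu) <= mbar A mu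
  <= (NN A)%:R * (Num.sqrt (mu ^+ 2 + 1) - mu) + 2 * (Num.sqrt (mu ^+ 2 + 1) - 1).
Proof.
move=> A_gt0 mu_ge0; set t := Num.sqrt _.
have [mu0|mu_neq0] := eqVneq mu 0.
  have t1 : t = 1 by rewrite /t mu0 expr0n add0r sqrtr1.
  rewrite t1 mu0 subr0 subrr mulr0 addr0 mulr1.
  apply: dominant_eigenvalue_bounds => [x x_lt|l].
    have center : (A < (NN A).+1)%N by rewrite ltnS leq_pmull.
    exists (NN A)%:R; first exact: ltW.
    rewrite scale0r addr0 /Mmat.
    by have := eigenvalue_diag_mx (fitness R A) (Ordinal center); rewrite mxE eqxx.
  have r_ge : (0 : R) <= 0 * 1 ^+ 2 + 2 * 1 by lra.
  by move=> /(qs_eigenvalue_le (lexx 0) ltr01 r_ge); lra.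
have mu_gt0 : 0 < mu by rewrite lt_def mu_neq0.
have t_sq : t ^+ 2 = mu ^+ 2 + 1 by rewrite sqr_sqrtr // addr_ge0 ?sqr_ge0.
have t_gt1 : 1 < t.
  by rewrite -sqrtr1 ltr_sqrt ?ltrDr ?exprn_gt0 // addr_gt0 ?exprn_gt0.
pose e := (t - 1) / mu.
have mu_e : mu * e = t - 1 by rewrite /e mulrC divfK.
have e_gt0 : 0 < e by rewrite divr_gt0 // subr_gt0.
have e_root : mu * e ^+ 2 + 2 * e - mu = 0.
  apply: (mulfI mu_neq0); rewrite mulr0.
  transitivity ((mu * e) ^+ 2 + 2 * (mu * e) - mu ^+ 2); first by ring.
  by rewrite mu_e -(subrr (t ^+ 2)) {2}t_sq; ring.
have s_e : 1 - mu + mu * e = t - mu by rewrite mu_e; ring.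
apply: dominant_eigenvalue_bounds => [x|l].
  by rewrite -s_e; apply: qs_eigenvalue_ge => //; [exact: ltW | lra].
move=> /(qs_eigenvalue_le mu_ge0 e_gt0); rewrite s_e -mulrA mu_e; apply; lra.
Qed.

Lemma rbar_bounds (R : realType) (A : nat) (mu : R) : (0 < A)%N -> 0 <= mu ->
  Num.sqrt (mu ^+ 2 + 1) - mu <= rbar A mu
  <= Num.sqrt (mu ^+ 2 + 1) - mu + (Num.sqrt (mu ^+ 2 + 1) - 1) / A%:R.
Proof.
move=> A_gt0 mu_ge0; have := mbar_bounds A_gt0 mu_ge0; set t := Num.sqrt _.
have N_gt0 : 0 < (NN A)%:R :> R by rewrite ltr0n muln_gt0.
have A_neq0 : A%:R != 0 :> R by rewrite pnatr_eq0 -lt0n.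
have hi_eq : (t - mu + (t - 1) / A%:R) * (NN A)%:R = (NN A)%:R * (t - mu) + 2 * (t - 1).
  by rewrite natrM; field.
by rewrite /rbar ler_pdivlMr // ler_pdivrMr // hi_eq mulrC.
Qed.

Theorem proposition3 (R : realType) (mu : R) (hmu : 0 <= mu) :
  (fun A : nat => rbar A.+1 mu) @ \oo --> Num.sqrt (mu ^+ 2 + 1) - mu.
Proof.
set t := Num.sqrt _; set s := t - mu.
apply: (@squeeze_cvgr _ _ _ _ (fun=> s) (fun A => s + (t - 1) * harmonic A)).
- by apply: nearW => A; exact: rbar_bounds.
- exact: cvg_cst.
- rewrite -[X in _ --> X]addr0 -[X in s + X](mulr0 (t - 1)).
  by apply: cvgD; [exact: cvg_cst | apply: cvgMl_tmp; exact: cvg_harmonic].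
Qed.
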